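(* In the setting of the context, let $i\in\{1,\dots,n\}$ and let $(x,y)\in\mathbb{Z}^2$ with $\gcd(x,y)=1$, $(x,y)\notin\mathbf{A}$, $0<y\le Y_S$, $|F(x,y)|\le h$ and $|L_i(x,y)|>\frac{1}{2y}$. Then $$|m(x,y)-\beta_i(x,y)|\le \frac72+2h^{1/n}Y_S.$$
   Context: Setting: $n\ge3$; $F(x,y)=\sum_{i=0}^s a_ix^{n_i}y^{n-n_i}\in\mathbb{Z}[x,y]$ of degree $n$, irreducible over $\mathbb{Q}$, all $a_i\neq0$, $0=n_0<\dots<n_s=n$, discriminant $D$. $R=n^{800\log^2n}$; $h$ a positive integer and $\kappa>1$ an integer with $h\le |D|^{\frac{1}{2(n-1)(2+1/\kappa)}}/\big((3R)^{n/2}(ns)^{2s+n}\big)$; $Y_S=e^6s(ns)^{2s/n}h^{1/(\kappa n)}$. Write $F(x,y)=a\prod_{i=1}^n(x-\alpha_iy)$ ($\alpha_i$ the roots of $F(x,1)$) and $L_i(x,y)=x-\alpha_iy$. A ''solution'' is a pair $(x,y)\in\mathbb{Z}^2$ with $\gcd(x,y)=1$ and $1\le|F(x,y)|\le h$, with $(x,y)$ and $(-x,-y)$ identified. Assume there is a solution with $0\le y\le Y_S$, and fix one such, $(x_0,y_0)$, with $y_0\ge0$ minimal. Index the roots so that $|L_1(x_0,y_0)|=\min_i|L_i(x_0,y_0)|$. There is at most one solution $(x^*,y^* )$ with $0<y^*\le Y_S$ and $|L_1(x^*,y^* )|<1/(2Y_S)$; let $\mathbf{A}=\{(x_0,y_0)\}$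 together with $(x^*,y^* )$ if it exists. For a primitive $(x,y)$ choose integers $x',y'$ with $x'y-xy'=1$ and set $\beta_j(x,y)=-L_j(x',y')/L_j(x,y)$ for $j=1,\dots,n$ (so that $F(ux+wx',uy+wy')=F(x,y)\prod_j(u-\beta_j(x,y)w)$), and let $m(x,y)$ be an integer with $|\mathrm{Re}\,\beta_1(x,y)-m(x,y)|\le 1/2$. *)

From mathcomp Require Import all_boot all_order all_algebra.
From mathcomp Require Import all_classical all_reals all_analysis.
From mathcomp.real_closed Require Import complex.
Set Implicit Arguments. Unset Strict Implicit. Unset Printing Implicit Defensive.
Import Order.TTheory GRing.Theory Num.Theory.
Local Open Scope ring_scope.

Notation normc := ComplexField.Normc.normc.

Definition Fform (s n : nat) (a : 'I_s.+1 -> int) (e : 'I_s.+1 -> nat) (x y : int) : int :=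
  \sum_(i < s.+1) a i * x ^+ e i * y ^+ (n - e i).

Definition Fpoly1 (s : nat) (a : 'I_s.+1 -> int) (e : 'I_s.+1 -> nat) : {poly int} :=
  \sum_(i < s.+1) (a i)%:P * 'X^(e i).

Definition Lf (R : rcfType) (n : nat) (alpha : 'I_n -> R[i]) (j : 'I_n) (x y : int) : R[i] :=
  x%:~R - alpha j * y%:~R.

Definition betaf (R : rcfType) (n : nat) (alpha : 'I_n -> R[i]) (j : 'I_n) (x y x' y' : int) : R[i] :=
  - Lf alpha j x' y' / Lf alpha j x y.

(* discriminant of the binary form a * prod (x - alpha_j y) *)
Definition discF (R : rcfType) (n : nat) (lead : R[i]) (alpha : 'I_n -> R[i]) : R[i] :=
  lead ^+ (2 * n - 2) * \prod_(j < n) \prod_(k < n | (j < k)%N) (alpha j - alpha k) ^+ 2.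

Definition Rconst (R : realType) (n : nat) : R := (n%:R) `^ (800 * (ln (n%:R)) ^+ 2).

Definition YS (R : realType) (n s h kappa : nat) : R :=
  expR 6 * s%:R * ((n * s)%:R `^ ((2 * s)%:R / n%:R)) * (h%:R `^ (1 / (kappa * n)%:R)).

Definition is_sol (s n : nat) (a : 'I_s.+1 -> int) (e : 'I_s.+1 -> nat) (h : nat) (x y : int) : Prop :=
  gcdz x y = 1 /\ 1 <= `|Fform n a e x y| /\ `|Fform n a e x y| <= h%:Z.

(* membership in the set A = {(x0,y0)} U {(xs,ys)}, up to (x,y) ~ (-x,-y);
   (xs,ys) is the (at most one) solution with 0 < ys <= Y_S and |L_1(xs,ys)| < 1/(2 Y_S) *)
Definition inA (R : realType) (s n : nat) (a : 'I_s.+1 -> int) (e : 'I_s.+1 -> nat)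
  (h kappa : nat) (alpha : 'I_n -> R[i]) (i1 : 'I_n) (x0 y0 x y : int) : Prop :=
  (x = x0 /\ y = y0) \/ (x = - x0 /\ y = - y0) \/
  (exists2 sg : int, (sg = 1 \/ sg = -1) &
     is_sol n a e h (sg * x) (sg * y) /\ 0 < sg * y /\
     ((sg * y)%:~R <= YS R n s h kappa :> R) /\
     normc (Lf alpha i1 (sg * x) (sg * y)) < 1 / (2 * YS R n s h kappa)).

From mathcomp Require Import all_boot all_order all_algebra.
From mathcomp Require Import all_classical all_reals all_analysis.
From mathcomp.real_closed Require Import complex.
From mathcomp Require Import ring lra.

Set Implicit Arguments.
Unset Strict Implicit.
Unset Printing Implicit Defensive.
Import Order.TTheory GRing.Theory Num.Theory.
Local Open Scope ring_scope.

(* Since x'y - xy' = 1, beta_j(x,y) = -y'/y - 1/(y L_j(x,y)), and as -y'/y is real,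
   m - beta_i differs from m - Re beta_1 by -Re(1/(y L_1)) + 1/(y L_i).  The hypothesis
   on L_i bounds the last term by 2.  As F(X,1) is irreducible of degree n >= 3, it has
   no rational root, so F(x,y) <> 0 and (x,y) is a solution; not lying in A, it has
   |L_1(x,y)| >= 1/(2 Y_S), which bounds the middle term by 2 Y_S. *)

Lemma irredp_root_size (K : idomainType) (p : {poly K}) (z : K) :
  irreducible_poly p -> root p z -> size p = 2%N.
Proof.
move=> p_irr; rewrite root_factor_theorem => /(p_irr.2 _); rewrite size_XsubC.
by move=> /(_ isT) /eqp_size <-; rewrite size_XsubC.
Qed.

Section BinaryForm.

Variables (s n : nat) (a : 'I_s.+1 -> int) (e : 'I_s.+1 -> nat).
Hypothesis e_le : forall k, (e k <= n)%N.

Lemma Fpoly1_homog (K : fieldType) (x y : int) : (y%:~R : K) != 0 ->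
  (y%:~R : K) ^+ n * (map_poly intr (Fpoly1 a e)).[x%:~R / y%:~R] = (Fform n a e x y)%:~R.
Proof.
move=> y_neq0; rewrite /Fpoly1 /Fform rmorph_sum horner_sum big_distrr rmorph_sum /=.
apply: eq_bigr => k _; rewrite rmorphM /= map_polyC map_polyXn hornerCM hornerXn.
rewrite !rmorphM !rmorphXn /= -{1}(subnKC (e_le k)) exprD expr_div_n.
by field; rewrite expf_neq0.
Qed.

Lemma Fform_neq0 (x y : int) :
  irreducible_poly (map_poly (intr : int -> rat) (Fpoly1 a e)) ->
  size (Fpoly1 a e) != 2%N -> y != 0 -> Fform n a e x y != 0.
Proof.
move=> F_irr F_size y_neq0; apply: contra F_size => /eqP F_eq0.
have yQ_neq0 : (y%:~R : rat) != 0 by rewrite intr_eq0.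
have /(irredp_root_size F_irr) : root (map_poly (intr : int -> rat) (Fpoly1 a e)) (x%:~R / y%:~R).
  apply/eqP/(mulfI (expf_neq0 n yQ_neq0)).
  by rewrite Fpoly1_homog // F_eq0 mulr0.
by rewrite size_map_inj_poly //; [move->|apply: intr_inj].
Qed.

End BinaryForm.

Lemma exponent_le_deg (s n : nat) (e : 'I_s.+1 -> nat) :
  (forall i j : 'I_s.+1, (i < j)%N -> (e i < e j)%N) -> e ord_max = n ->
  forall k, (e k <= n)%N.
Proof.
move=> e_incr <- k; have [-> // | k_neq] := eqVneq k ord_max.
apply/ltnW/e_incr; rewrite ltn_neqAle -ltnS ltn_ord andbT.
by apply: contra k_neq => /eqP k_eq; apply/eqP/val_inj.
Qed.

Lemma size_Fpoly1 (R : rcfType) (s n : nat) (a : 'I_s.+1 -> int) (e : 'I_s.+1 -> nat)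
  (alpha : 'I_n -> R[i]) :
  a ord_max != 0 ->
  map_poly (intr : int -> R[i]) (Fpoly1 a e)
    = (a ord_max)%:~R *: \prod_(j < n) ('X - (alpha j)%:P) ->
  size (Fpoly1 a e) = n.+1.
Proof.
move=> a_neq0 F_roots; rewrite -(size_map_inj_poly (@intr_inj R[i])) // F_roots.
by rewrite size_scale ?intr_eq0 // size_prod_XsubC /index_enum unlock /= -enumT size_enum_ord.
Qed.

Section BetaEstimates.

Variable R : rcfType.

Lemma normc_real (r : R) : normc (r%:C)%C = `|r|.
Proof. by rewrite /= expr0n /= addr0 sqrtr_sqr. Qed.

Lemma normc_int (k : int) : normc (k%:~R : R[i]) = `|k%:~R|.
Proof. by rewrite -(rmorph_int (real_complex R)) normc_real. Qed.

Lemma Re_le_normc (z : R[i]) : `|complex.Re z| <= normc z.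
Proof.
case: z => u v /=; rewrite -sqrtr_sqr; apply: ler_wsqrtr.
by rewrite lerDl sqr_ge0.
Qed.

Lemma normc_gt0_neq0 (z : R[i]) : 0 < normc z -> z != 0.
Proof. by apply: contraTneq => ->; rewrite ComplexField.Normc.normc0 ltxx. Qed.

Lemma betafE n (alpha : 'I_n -> R[i]) j (x y x' y' : int) :
  x' * y - x * y' = 1 -> y != 0 -> Lf alpha j x y != 0 ->
  betaf alpha j x y x' y' = - ((y'%:~R / y%:~R : R)%:C)%C - (y%:~R * Lf alpha j x y)^-1.
Proof.
move=> unimod y_neq0 L_neq0.
have unimodC : (x'%:~R * y%:~R - x%:~R * y'%:~R : R[i]) = 1.
  by rewrite -!intrM -intrB unimod.
have yC_neq0 : (y%:~R : R[i]) != 0 by rewrite intr_eq0.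
have -> : (y%:~R * Lf alpha j x y)^-1
    = (x'%:~R * y%:~R - x%:~R * y'%:~R) / (y%:~R * Lf alpha j x y).
  by rewrite unimodC div1r.
rewrite rmorphM fmorphV /= !rmorph_int.
by rewrite /betaf /Lf in L_neq0 *; field; rewrite yC_neq0 L_neq0.
Qed.

Lemma normc_invM_le (y : int) (z : R[i]) (c : R) : 0 < y -> 0 < c -> c <= normc z ->
  normc ((y%:~R * z)^-1) <= (y%:~R * c)^-1.
Proof.
move=> y_gt0 c_gt0 c_le; have yR_gt0 : 0 < (y%:~R : R) by rewrite ltr0z.
rewrite ComplexField.Normc.normcV ComplexField.Normc.normcM normc_int gtr0_norm //.
have z_gt0 : 0 < normc z := lt_le_trans c_gt0 c_le.
by rewrite lef_pV2 ?posrE ?mulr_gt0 // ler_pM2l.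
Qed.

Lemma normc_beta_form_le (q m : R) (w1 w : R[i]) :
  normc (m%:C - (- q%:C - w))%C <= `|complex.Re (- q%:C - w1)%C - m| + normc w1 + normc w.
Proof.
have -> : (m%:C - (- q%:C - w) = (m - complex.Re (- q%:C - w1))%:C - (complex.Re w1)%:C + w)%C.
  by case: w1 => u v; rewrite /= !rmorphB !rmorphN /=; ring.
apply: le_trans (le_normcD _ _) _; rewrite lerD2r.
apply: le_trans (le_normcD _ _) _; rewrite normcN !normc_real distrC lerD2l.
exact: Re_le_normc.
Qed.

Lemma normc_sub_betaf_le n (alpha : 'I_n -> R[i]) (i1 j : 'I_n) (x y x' y' m : int) (Y : R) :
  x' * y - x * y' = 1 -> 0 < y -> 0 < Y ->
  1 / (2 * Y) <= normc (Lf alpha i1 x y) -> 1 / (2 * y%:~R) < normc (Lf alpha j x y) ->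
  `|complex.Re (betaf alpha i1 x y x' y') - m%:~R| <= 1 / 2 ->
  normc (m%:~R - betaf alpha j x y x' y') <= 1 / 2 + 2 * Y + 2.
Proof.
move=> unimod y_gt0 Y_gt0 L1_ge Lj_gt Re_near.
have yR_ge1 : 1 <= (y%:~R : R) by rewrite ler1z -gtz0_ge1.
have yR_gt0 : 0 < (y%:~R : R) by rewrite ltr0z.
have inv2Y_gt0 : 0 < 1 / (2 * Y) by rewrite divr_gt0 // mulr_gt0.
have inv2y_gt0 : 0 < 1 / (2 * y%:~R) :> R by rewrite divr_gt0 // mulr_gt0.
have y_neq0 : y != 0 by rewrite gt_eqF.
rewrite (betafE unimod y_neq0) ?normc_gt0_neq0 ?(lt_le_trans inv2Y_gt0) // in Re_near.
rewrite (betafE unimod y_neq0) ?normc_gt0_neq0 ?(lt_trans inv2y_gt0) //.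
rewrite -(rmorph_int (real_complex R) m).
apply: le_trans (normc_beta_form_le _ _ ((y%:~R * Lf alpha i1 x y)^-1) _) _.
have w1_le : normc ((y%:~R * Lf alpha i1 x y)^-1) <= 2 * Y.
  apply: le_trans (normc_invM_le y_gt0 inv2Y_gt0 L1_ge) _.
  by rewrite mul1r invfM invrK ler_piMl ?invf_le1 // ltW // mulr_gt0.
have wj_le : normc ((y%:~R * Lf alpha j x y)^-1) <= 2.
  apply: le_trans (normc_invM_le y_gt0 inv2y_gt0 (ltW Lj_gt)) _.
  by rewrite mul1r invfM invrK mulrCA mulVf ?mulr1 ?gt_eqF.
lra.
Qed.

End BetaEstimates.

Lemma normc_Lf_ge_of_notin_A (R : realType) (s n : nat) (a : 'I_s.+1 -> int)
  (e : 'I_s.+1 -> nat) (h kappa : nat) (alpha : 'I_n -> R[i]) (i1 : 'I_n) (x0 y0 x y : int) :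
  ~ inA a e h kappa alpha i1 x0 y0 x y -> is_sol n a e h x y -> 0 < y ->
  (y%:~R : R) <= YS R n s h kappa ->
  1 / (2 * YS R n s h kappa) <= normc (Lf alpha i1 x y).
Proof.
move=> notin_A sol y_gt0 y_le; rewrite leNgt; apply/negP => L_lt; apply: notin_A.
by rewrite /inA; right; right; exists 1; [left | rewrite !mul1r in L_lt *].
Qed.

Theorem lemma4p4 (R : realType) (n s : nat) (a : 'I_s.+1 -> int) (e : 'I_s.+1 -> nat)
  (Hn : (3 <= n)%N)
  (He_incr : forall i j : 'I_s.+1, (i < j)%N -> (e i < e j)%N)
  (He0 : e ord0 = 0%N) (Hes : e ord_max = n)
  (Ha : forall i, a i != 0)
  (Hirr : irreducible_poly (map_poly (intr : int -> rat) (Fpoly1 a e)))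
  (alpha : 'I_n -> R[i])
  (Hroots : map_poly (intr : int -> R[i]) (Fpoly1 a e)
            = (a ord_max)%:~R *: \prod_(j < n) ('X - (alpha j)%:P))
  (h kappa : nat) (Hh : (0 < h)%N) (Hkappa : (1 < kappa)%N)
  (HhD : (h%:R : R) <=
     normc (discF (a ord_max)%:~R alpha) `^ (1 / (2 * (n - 1)%:R * (2 + 1 / kappa%:R)))
     / ((3 * Rconst R n) `^ (n%:R / 2) * (n * s)%:R ^+ (2 * s + n)))
  (x0 y0 : int)
  (Hsol0 : is_sol n a e h x0 y0) (Hy0 : 0 <= y0) (Hy0Y : (y0%:~R : R) <= YS R n s h kappa)
  (Hy0min : forall x y : int, is_sol n a e h x y -> 0 <= y ->
              (y%:~R : R) <= YS R n s h kappa -> y0 <= y)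
  (i1 : 'I_n)
  (Hi1 : forall j : 'I_n, normc (Lf alpha i1 x0 y0) <= normc (Lf alpha j x0 y0))
  (i : 'I_n) (x y : int)
  (Hgcd : gcdz x y = 1)
  (HnotA : ~ inA a e h kappa alpha i1 x0 y0 x y)
  (Hy : 0 < y) (HyY : (y%:~R : R) <= YS R n s h kappa)
  (HF : `|Fform n a e x y| <= h%:Z)
  (HLi : normc (Lf alpha i x y) > 1 / (2 * y%:~R))
  (x' y' : int) (Hxy' : x' * y - x * y' = 1)
  (m : int) (Hm : `|complex.Re (betaf alpha i1 x y x' y') - m%:~R| <= 1 / 2 :> R) :
  normc (m%:~R - betaf alpha i x y x' y')
    <= 7 / 2 + 2 * (h%:R `^ (1 / n%:R)) * YS R n s h kappa.
Proof.
(* The bound on h, the minimality of y0 and the choice of i1 only matter for the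
   definition of A. *)
set Y := YS R n s h kappa.
have F_neq0 : Fform n a e x y != 0.
  apply: Fform_neq0 Hirr _ (lt0r_neq0 Hy); first exact: exponent_le_deg He_incr Hes.
  by rewrite (size_Fpoly1 (Ha _) Hroots) eqSS gtn_eqF // (leq_trans _ Hn).
have sol : is_sol n a e h x y by split; rewrite // -gtz0_ge1 normr_gt0.
have L1_ge : 1 / (2 * Y) <= normc (Lf alpha i1 x y) := normc_Lf_ge_of_notin_A HnotA sol Hy HyY.
have Y_ge1 : 1 <= Y by apply: le_trans HyY; rewrite ler1z -gtz0_ge1.
have h_root_ge1 : 1 <= (h%:R : R) `^ (1 / n%:R).
  rewrite -[X in X <= _](powRr0 (h%:R : R)).
  by apply: ler_powR; rewrite ?ler1n ?divr_ge0.
apply: le_trans (normc_sub_betaf_le Hxy' Hy _ L1_ge HLi Hm) _; first exact: lt_le_trans ltr01 Y_ge1.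
by nra.
Qed.
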